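(* Let $(M,d)$ be a compact metric space and $\varphi:M\to M$ continuous with $h_{\rm Top}(\varphi)<\infty$ and $\mathbb Q\mapsto h_\varphi(\mathbb Q)$ upper semicontinuous on $\mathcal P_\varphi(M)$. Let $\mathbb P\in\mathcal P(M)$ be a weak Gibbs measure for $\mathcal G\in\mathcal A(M)$. Then for every $\mathcal G'=\{G_n'\}\in\mathcal A(M)$, $$\lim_{n\to\infty}\frac1n\log\int_Me^{G_n'}\,d\mathbb P=\mathfrak p_\varphi(\mathcal G+\mathcal G')-\mathfrak p_\varphi(\mathcal G).$$
   Context: $C(M),B(M)$: continuous/bounded Borel real functions, sup norm; $\mathcal P_\varphi(M)$ invariant Borel probability measures; $h_\varphi$ Kolmogorov–Sinai entropy, $h_{\rm Top}$ topological entropy; $S_nG=\sum_{k<n}G\circ\varphi^k$; $B_n(x,\epsilon)=\{y:d(\varphi^ky,\varphi^kx)<\epsilon,0\le k<n\}$. $\mathcal A(M)$: $\{G_n\}\subset B(M)$ such that some $\{G^{(k)}\}\subset C(M)$ has $\lim_k\limsup_nn^{-1}\|G_n-S_nG^{(k)}\|_\infty=0$; sums termwise. Pressure $\mathfrak p_\varphi(\mathcal G)=\lim_{\epsilon\downarrow0}\limsup_nn^{-1}\log\inf\{\sum_{x\in E}e^{G_n(x)}:E\text{ finite},\bigcup_{x\in E}B_n(x,\epsilon)=M\}$. Weak Gibbs for $\mathcal G$: for every $n\ge1,\epsilon>0$ there is $K_n(\epsilon)\ge1$ with $K_n(\epsilon)^{-1}e^{G_n(x)-n\mathfrak p_\varphi(\mathcal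 G)}\le\mathbb P(B_n(x,\epsilon))\le K_n(\epsilon)e^{G_n(x)-n\mathfrak p_\varphi(\mathcal G)}$ for every $x\in M$, and $\lim_{\epsilon\downarrow0}\limsup_nn^{-1}\log K_n(\epsilon)=0$. *)

From HB Require Import structures.
From mathcomp Require Import all_boot all_order all_algebra finmap.
From mathcomp Require Import all_classical all_reals all_analysis.
Set Implicit Arguments. Unset Strict Implicit. Unset Printing Implicit Defensive.
Import Order.TTheory GRing.Theory Num.Theory.
Import numFieldNormedType.Exports.
Local Open Scope classical_set_scope.
Local Open Scope ring_scope.

Notation borelT M := (g_sigma_algebraType (@open M)).

(* metric spaces with a distinguished point (nonempty); needed for the
   generated sigma-algebra instance.  Harmless: M carries a probability. *)
#[short(type="pmetricType")]
HB.structure Definition PointedMetric (K : numDomainType) :=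
  { M of Pointed M & Metric K M }.

Section ergodic_defs.
Context {R : realType} {M : pmetricType R}.


Local Notation BM := (borelT M).

Definition bowen_ball (phi : M -> M) (n : nat) (x : M) (eps : R) : set M :=
  [set y | forall k, (k < n)%N -> mdist (iter k phi y) (iter k phi x) < eps].

Definition bowen_cover (phi : M -> M) (n : nat) (eps : R) (E : {fset M}) :=
  \bigcup_(x in [set` E]) bowen_ball phi n x eps = [set: M].

Definition birkhoff (phi : M -> M) (g : M -> R) (n : nat) (x : M) : R :=
  \sum_(k < n) g (iter k phi x).

Definition sup_norm (f : M -> R) : \bar R :=
  ereal_sup (range (fun x => (`|f x|)%:E)).

Definition classA (phi : M -> M) (G : nat -> M -> R) : Prop :=
  (forall n, exists C : R, forall x, `|G n x| <= C) /\
  (forall n, measurable_fun [set: BM] (G n : BM -> R)) /\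
  exists Gk : nat -> M -> R, (forall k, continuous (Gk k)) /\
    (fun k => limn_esup (fun n =>
        (sup_norm (fun x => (G n x - birkhoff phi (Gk k) n x)%R) * (n%:R^-1)%R%:E)%E))
      @ \oo --> (0 : \bar R).

Definition pressure (phi : M -> M) (G : nat -> M -> R) : \bar R :=
  lim ((fun eps => limn_esup (fun n =>
      (ln (fine (ereal_inf [set (\sum_(x <- E) expR (G n x))%:E
                             | E in [set E | bowen_cover phi n eps E]]))
        / n%:R)%:E)) @ 0^'+).

Definition htop (phi : M -> M) : \bar R :=
  lim ((fun eps => limn_esup (fun n =>
      (ln (fine (ereal_inf [set (#|` E|%:R)%:E
                             | E in [set E | bowen_cover phi n eps E]]))
        / n%:R)%:E)) @ 0^'+).

Definition invariant (phi : M -> M) (Q : probability BM R) : Prop :=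
  forall A : set BM, measurable A -> Q (phi @^-1` A) = Q A.

Definition mpartition (m : nat) (xi : 'I_m -> set BM) : Prop :=
  (forall i, measurable (xi i)) /\
  (forall i j, i != j -> xi i `&` xi j = set0) /\
  (forall x, exists i, xi i x).

Definition eta (t : R) : R := - (t * ln t).

Definition join_entropy (phi : M -> M) (Q : probability BM R) (m : nat)
    (xi : 'I_m -> set BM) (n : nat) : R :=
  \sum_(w : {ffun 'I_n -> 'I_m})
     eta (fine (Q [set x | forall k : 'I_n, xi (w k) (iter k phi x)])).

(* h_Q(phi, xi) = lim_n (1/n) H_Q(join) (the limit exists; taken as limsup) *)
Definition part_entropy (phi : M -> M) (Q : probability BM R) (m : nat)
    (xi : 'I_m -> set BM) : \bar R :=
  limn_esup (fun n => (join_entropy phi Q xi n / n%:R)%:E).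

Definition ks_entropy (phi : M -> M) (Q : probability BM R) : \bar R :=
  ereal_sup [set e | exists (m : nat) (xi : 'I_m -> set BM),
                        mpartition xi /\ e = part_entropy phi Q xi].

(* upper semicontinuity of Q |-> h_phi(Q) on P_phi(M) for the weak* topology *)
Definition entropy_usc (phi : M -> M) : Prop :=
  forall Q : probability BM R, invariant phi Q ->
  forall c : R, (ks_entropy phi Q < c%:E)%E ->
  exists (k : nat) (f : 'I_k -> M -> R) (delta : R),
    0 < delta /\ (forall i, continuous (f i)) /\
    forall Q' : probability BM R, invariant phi Q' ->
      (forall i, `|Rintegral Q' setT (f i : BM -> R) - Rintegral Q setT (f i : BM -> R)| < delta) ->
      (ks_entropy phi Q' < c%:E)%E.

Definition weak_gibbs (phi : M -> M) (G : nat -> M -> R) (P : probability BM R) : Prop :=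
  exists p : R, pressure phi G = p%:E /\
  exists K : nat -> R -> R,
    (forall n eps, (1 <= n)%N -> 0 < eps ->
       1 <= K n eps /\
       forall x,
         (((K n eps)^-1 * expR (G n x - n%:R * p))%:E <= P (bowen_ball phi n x eps))%E /\
         (P (bowen_ball phi n x eps) <= (K n eps * expR (G n x - n%:R * p))%:E)%E) /\
    (fun eps => limn_esup (fun n => (ln (K n eps) / n%:R)%:E)) @ 0^'+ --> (0 : \bar R).

End ergodic_defs.

(* Let Z_n(H, eps) be the least value of sum_(x in E) exp (H_n x) over (n, eps)-spanning
   sets E, so that the pressure of H is lim_(eps -> 0) limsup_n (1/n) log Z_n(H, eps).
   The weak Gibbs bounds turn the integral of exp G'_n, up to a factor exp (- n p + o(n)),
   into sums of exp (G + G')_n over centres of Bowen balls: summing over an (n, eps)-spanning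
   set bounds it above by Z_n(G + G', eps), summing over a maximal (n, 2 eps)-separated set
   bounds it below by Z_n(G + G', 2 eps).  The o(n) errors come from K_n(eps) and from the
   oscillation of G'_n on Bowen balls, which is small because G'_n is uniformly close to a
   Birkhoff sum of a continuous function.
   This controls the lim sup; for the lim inf, (1/n) log Z_n(G + G', eps) must nearly
   converge.  When G + G' is close to a Birkhoff sum S_n h, Z_n at the scales r and 4 r is
   comparable with the least weight of a cover of M by tubes of orbits shadowing words over
   a finite r-net.  These word sums are submultiplicative, so by Fekete's lemma their
   normalized logarithms converge. *)

From HB Require Import structures.
From mathcomp Require Import all_boot all_order all_algebra finmap.
From mathcomp Require Import all_classical all_reals all_analysis.
From mathcomp Require Import ring lra.
Import Order.TTheory GRing.Theory Num.Theory.
Import numFieldNormedType.Exports.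
Local Open Scope classical_set_scope.
Local Open Scope ring_scope.

Section limn_esup_near.
Context {R : realType}.
Local Open Scope ereal_scope.

Lemma limn_esup_le_near (u : nat -> R) (c : R) :
  (\forall n \near \oo, (u n <= c)%R) -> limn_esup (fun n => (u n)%:E) <= c%:E.
Proof.
move=> uc; rewrite /limn_esup limf_esupE.
apply: (@le_trans _ _ (ereal_sup [set (u n)%:E | n in [set n | (u n <= c)%R]])).
  by apply: ereal_inf_lbound; exists [set n | (u n <= c)%R].
by apply: ge_ereal_sup => _ [n /= hn <-]; rewrite lee_fin.
Qed.

Lemma limn_esup_ge_near (u : nat -> R) (c : R) :
  (\forall n \near \oo, (c <= u n)%R) -> c%:E <= limn_esup (fun n => (u n)%:E).
Proof.
move=> cu; rewrite /limn_esup limf_esupE.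
apply: le_ereal_inf_tmp => _ [V hV <-].
have [n [cun Vn]] := filter_ex (filterI cu hV).
by apply: (@le_trans _ _ (u n)%:E); [rewrite lee_fin | apply: ereal_sup_ubound; exists n].
Qed.

Lemma limn_esup_lt_near (u : nat -> \bar R) (c : \bar R) :
  limn_esup u < c -> \forall n \near \oo, u n < c.
Proof.
rewrite /limn_esup limf_esupE => /ereal_inf_lt [_ [V hV <-] hlt].
apply: filterS hV => n Vn.
by apply: le_lt_trans hlt; apply: ereal_sup_ubound; exists n.
Qed.

Lemma le_limn_esup (u v : nat -> \bar R) :
  (forall n, u n <= v n) -> limn_esup u <= limn_esup v.
Proof.
move=> uv; rewrite /limn_esup !limf_esupE.
apply: le_ereal_inf_tmp => _ [V hV <-].
apply: (@le_trans _ _ (ereal_sup [set u n | n in V])).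
  by apply: ereal_inf_lbound; exists V.
apply: ge_ereal_sup => _ [n Vn <-].
by apply: (le_trans (uv n)); apply: ereal_sup_ubound; exists n.
Qed.

End limn_esup_near.

Lemma near_at_right0 {R : realType} {Q : R -> Prop} : (\forall x \near 0^'+, Q x) ->
  exists2 e : R, 0 < e & forall x, 0 < x -> x < e -> Q x.
Proof.
move=> /nbhs_ballP [e e0 eQ]; exists e => // x x0 xe.
by apply: eQ => //; rewrite /ball /= sub0r normrN gtr0_norm.
Qed.

Lemma ln_le_lnM_expR {R : realType} {u v w t : R} : 0 < u -> 0 < v -> 0 < w ->
  u <= v * expR t * w -> ln u <= ln v + t + ln w.
Proof.
move=> u0 v0 w0; rewrite -ler_ln ?posrE ?mulr_gt0 ?expR_gt0 //.
by rewrite !lnM ?posrE ?mulr_gt0 ?expR_gt0 // expRK.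
Qed.

Lemma ln_le_expRM {R : realType} {u w t : R} : 0 < u -> 0 < w ->
  u <= expR t * w -> ln u <= t + ln w.
Proof.
move=> u0 w0; rewrite -ler_ln ?posrE ?mulr_gt0 ?expR_gt0 //.
by rewrite lnM ?posrE ?expR_gt0 // expRK.
Qed.

Lemma addr_div_nat {R : realType} (B c : R) n : (0 < n)%N ->
  B / n%:R + c = (B + c * n%:R) / n%:R.
Proof. by move=> n0; rewrite mulrDl mulfK // pnatr_eq0 -lt0n. Qed.

Section fekete.
Context {R : realType}.
Variable s : nat -> R.
Hypothesis s_subadditive : forall m n, s (m + n)%N <= s m + s n.
Hypothesis s_linear_lb : exists B, forall n, (0 < n)%N -> - B <= s n / n%:R.

Lemma subadditive_iter q N r : s (q * N + r)%N <= q%:R * s N + s r.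
Proof.
elim: q => [|q IH]; first by rewrite mul0n add0n mul0r add0r.
rewrite mulSn -addnA; apply: (le_trans (s_subadditive _ _)).
by rewrite -nat1r mulrDl mul1r -addrA lerD2l.
Qed.

Lemma subadditive_le N n : (0 < N)%N ->
  s n <= n%:R * (s N / N%:R) + (\sum_(i < N) `|s i| + `|s N|).
Proof.
move=> N0; have Npos : 0 < N%:R :> R by rewrite ltr0n.
have rN : (n %% N < N)%N by rewrite ltn_mod.
set r := (n %% N)%N in rN *; set q := (n %/ N)%N.
have nE : n%:R = q%:R * N%:R + r%:R :> R by rewrite {1}(divn_eq n N) natrD natrM.
have sn : s n <= q%:R * s N + s r by rewrite {1}(divn_eq n N); apply: subadditive_iter.
have qE : q%:R * s N = n%:R * (s N / N%:R) - r%:R / N%:R * s N.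
  by rewrite nE; field; rewrite lt0r_neq0.
have rest : - (r%:R / N%:R * s N) <= `|s N|.
  apply: (le_trans (ler_norm _)); rewrite normrN normrM ger0_norm ?divr_ge0 //.
  by rewrite ler_piMl // ler_pdivrMr // mul1r ler_nat ltnW.
have sr : s r <= \sum_(i < N) `|s i|.
  by rewrite (le_trans (ler_norm _)) // (bigD1 (Ordinal rN)) //= lerDl sumr_ge0.
rewrite qE in sn; lra.
Qed.

Lemma fekete :
  (fun n => s n / n%:R) @ \oo --> inf [set s N / N%:R | N in [set N | (0 < N)%N]].
Proof.
set S := [set _ | _ in _].
have S_lb : has_lbound S by have [B hB] := s_linear_lb; exists (- B) => _ [N N0 <-]; apply: hB.
have S_inf : has_inf S by split => //; exists (s 1%N / 1%:R), 1%N.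
apply/cvgrPdist_le => eta eta0.
have eta2 : 0 < eta / 2 by rewrite divr_gt0.
have [_ [N N0 <-] hN] := inf_adherent eta2 S_inf.
set D := \sum_(i < N) `|s i| + `|s N|.
have [K hK] : exists K : nat, D / (eta / 2) < K%:R.
  by exists (Num.trunc (D / (eta / 2))).+1; rewrite truncnS_gt.
near=> n.
have n0 : (0 < n)%N by near: n; exact: nbhs_infty_gt.
have nK : (K <= n)%N by near: n; exists K.
have npos : 0 < n%:R :> R by rewrite ltr0n.
have infn : inf S <= s n / n%:R by apply: ge_inf => //; exists n.
have Dn : D <= eta / 2 * n%:R.
  by rewrite mulrC -ler_pdivrMr // (le_trans (ltW hK)) // ler_nat.
have sn : s n <= n%:R * (s N / N%:R) + D by apply: subadditive_le.
have snN : n%:R * (s N / N%:R) <= n%:R * (inf S + eta / 2) by rewrite ler_pM2l // ltW.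
have snub : s n / n%:R <= inf S + eta.
  by rewrite ler_pdivrMr //; move: snN; set u := s N / N%:R; nra.
by rewrite /= ler_norml; apply/andP; split; lra.
Unshelve. all: by end_near.
Qed.

End fekete.

Section antitone_at_right0.
Context {R : realType}.
Variables (A : R -> \bar R) (b c : R).
Hypothesis A_antitone : forall e1 e2 : R, 0 < e1 -> e1 <= e2 -> (A e2 <= A e1)%E.
Hypothesis b_gt0 : 0 < b.
Hypothesis A_ub : forall e : R, 0 < e -> e < b -> (A e <= c%:E)%E.
Hypothesis A_gtNy : exists2 e : R, 0 < e & (-oo < A e)%E.

Lemma antitone_lim_at_right0 : exists q : R,
  [/\ lim (A @ 0^'+) = q%:E, forall e : R, 0 < e -> (A e <= q%:E)%E &
      forall eta : R, 0 < eta -> exists2 e : R, 0 < e & ((q - eta)%:E < A e)%E].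
Proof.
have A_cvg := @nonincreasing_at_right_cvge R A 0 (BLeft b).
have /A_cvg{}A_cvg : (BRight 0 < BLeft b)%O by rewrite bnd_simp.
have /A_cvg{}A_cvg : {in `]0, b[ &, {homo A : x y / x <= y >-> (y <= x)%E}}.
  by move=> x y; rewrite in_itv /= => /andP[x0 _] _; apply: A_antitone.
set Q := ereal_sup _ in A_cvg.
have A_le_Q (e : R) : 0 < e -> (A e <= Q)%E.
  move=> e0; set e' := Num.min e (b / 2).
  have e'0 : 0 < e' by rewrite lt_min e0 divr_gt0.
  have e'e : e' <= e by rewrite ge_min lexx.
  have e'b : e' < b.
    by rewrite (@le_lt_trans _ _ (b / 2)) ?ge_min ?lexx ?orbT // ltr_pdivrMr // ltr_pMr // ltr1n.
  apply: (le_trans (A_antitone _ _ e'0 e'e)).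
  by apply: ereal_sup_ubound; exists e' => //=; rewrite in_itv /= e'0.
have Q_fin : Q \is a fin_num.
  have [e1 e10 Ae1] := A_gtNy.
  rewrite fin_numElt (lt_le_trans Ae1 (A_le_Q e1 e10)) /=.
  apply: (@le_lt_trans _ _ c%:E); last exact: ltry.
  by apply: ge_ereal_sup => _ [e /= + <-]; rewrite in_itv /= => /andP[e0 eb]; apply: A_ub.
exists (fine Q); rewrite fineK //; split.
- by rewrite (cvg_lim _ A_cvg); last exact: ereal_hausdorff.
- exact: A_le_Q.
- move=> eta eta0; have : ((fine Q - eta)%:E < Q)%E.
    by rewrite -[X in (_ < X)%E]fineK // lte_fin ltrBlDr ltrDl.
  by move=> /ereal_sup_gt [_ [e /= + <-]]; rewrite in_itv /= => /andP[e0 _]; exists e.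
Qed.

End antitone_at_right0.

(* [a n] stands for (1/n) log of the integral of exp G'_n and [z eps n] for
   (1/n) log Z_n(G + G', eps).  [z_nearly_cvg] is what lets the lower bound [z_le_a],
   available at every large [n], reach the lim sup in the pressure. *)
Section pressure_squeeze.
Context {R : realType}.
Variables (a : nat -> R) (z : R -> nat -> R) (p : R).
Hypothesis z_antitone : forall (e1 e2 : R) n, 0 < e1 -> e1 <= e2 -> z e2 n <= z e1 n.
Hypothesis a_ub : exists C, \forall n \near \oo, a n <= C.
Hypothesis a_le_z : forall eta : R, 0 < eta -> exists2 e0 : R, 0 < e0 & forall eps : R, 0 < eps ->
  eps < e0 -> \forall n \near \oo, a n <= z eps n - p + eta.
Hypothesis z_le_a : forall eta : R, 0 < eta -> exists2 e0 : R, 0 < e0 & forall eps : R, 0 < eps ->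
  eps < e0 -> \forall n \near \oo, z (2 * eps) n - p - eta <= a n.
Hypothesis z_nearly_cvg : forall eta : R, 0 < eta -> exists2 e0 : R, 0 < e0 & forall r : R, 0 < r ->
  r < e0 -> exists L, (\forall n \near \oo, L - eta <= z r n) /\
                      (\forall n \near \oo, z (4 * r) n <= L + eta).

Let A eps := limn_esup (fun n => (z eps n)%:E).

Let A_antitone (e1 e2 : R) : 0 < e1 -> e1 <= e2 -> (A e2 <= A e1)%E.
Proof. by move=> e10 e12; apply: le_limn_esup => n; rewrite lee_fin; apply: z_antitone. Qed.

Lemma a_near_ub q : (forall e : R, 0 < e -> (A e <= q%:E)%E) ->
  forall eta : R, 0 < eta -> \forall n \near \oo, a n <= q - p + eta.
Proof.
move=> A_le eta eta0; have e0 : 0 < eta / 2 by rewrite divr_gt0.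
have [e1 e10 a_le] := a_le_z _ e0.
have e20 : 0 < e1 / 2 by rewrite divr_gt0.
have e21 : e1 / 2 < e1 by rewrite ltr_pdivrMr // ltr_pMr // ltr1n.
have : (A (e1 / 2) < (q + eta / 2)%:E)%E.
  by rewrite (le_lt_trans (A_le _ e20)) // lte_fin ltrDl.
move=> /limn_esup_lt_near z_lt; move: z_lt (a_le _ e20 e21); apply: filterS2 => n.
by rewrite lte_fin => h1 h2; lra.
Qed.

Lemma a_near_lb q : (forall eta : R, 0 < eta -> exists2 e : R, 0 < e & ((q - eta)%:E < A e)%E) ->
  forall eta : R, 0 < eta -> \forall n \near \oo, q - p - eta <= a n.
Proof.
move=> A_gt eta eta0; set e := eta / 4; have e0 : 0 < e by rewrite divr_gt0.
have [es es0 Aes] := A_gt e e0.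
have [ew ew0 z_cvg] := z_nearly_cvg _ e0.
have [el el0 z_le] := z_le_a _ e0.
have [eps eps0 [epsw epsl epss]] : exists2 eps : R, 0 < eps &
    [/\ 2 * eps < ew, eps < el & 8 * eps <= es].
  exists (Num.min (Num.min ew el) es / 8); first by rewrite divr_gt0 // !lt_min ew0 el0 es0.
  have : [/\ Num.min (Num.min ew el) es <= ew, Num.min (Num.min ew el) es <= el
           & Num.min (Num.min ew el) es <= es] by split; rewrite !ge_min lexx ?orbT.
  have : 0 < Num.min (Num.min ew el) es by rewrite !lt_min ew0 el0 es0.
  move: (Num.min _ _) => m m0 [mw ml ms]; split; lra.
have [L [L_le le_L]] := z_cvg (2 * eps) (mulr_gt0 (ltr0Sn _ 1) eps0) epsw.
have A8 : (A (4 * (2 * eps)) <= (L + e)%:E)%E := limn_esup_le_near _ _ le_L.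
have Aes8 : (A es <= A (4 * (2 * eps)))%E.
  by apply: A_antitone; [rewrite !mulr_gt0 | lra].
have qL : q - e < L + e by rewrite -lte_fin (lt_le_trans Aes) // (le_trans Aes8).
move: L_le (z_le _ eps0 epsl); apply: filterS2 => n.
by set w := z _ n; rewrite /e in qL * => h1 h2; lra.
Qed.

Lemma pressure_squeeze : (fun n => (a n)%:E) @ \oo -->
  (lim ((fun eps => limn_esup (fun n => (z eps n)%:E)) @ 0^'+) - p%:E)%E.
Proof.
have [el el0 z_le] := z_le_a _ ltr01; have [C a_le] := a_ub.
have A_ub (e : R) : 0 < e -> e < 2 * el -> (A e <= (C + p + 1)%:E)%E.
  move=> e0 e2l; apply: limn_esup_le_near.
  have := z_le (e / 2) (divr_gt0 e0 (ltr0Sn _ 1)) ltac:(lra).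
  by move: a_le; apply: filterS2 => n; rewrite mulrC divfK ?pnatr_eq0 //; lra.
have A_gtNy : exists2 e : R, 0 < e & (-oo < A e)%E.
  have [ew ew0 z_cvg] := z_nearly_cvg _ ltr01.
  have [L [L_le _]] := z_cvg (ew / 2) (divr_gt0 ew0 (ltr0Sn _ 1)) ltac:(lra).
  exists (ew / 2); first by rewrite divr_gt0.
  exact: (lt_le_trans (ltNyr (L - 1)) (limn_esup_ge_near _ _ L_le)).
have [q [-> A_le A_gt]] :=
  @antitone_lim_at_right0 _ A _ _ A_antitone (mulr_gt0 (ltr0Sn _ 1) el0) A_ub A_gtNy.
rewrite -EFinB; apply: cvg_EFin; first exact: nearW.
apply/cvgrPdist_le => eta eta0.
move: (a_near_ub _ A_le _ eta0) (a_near_lb _ A_gt _ eta0); apply: filterS2 => n h1 h2.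
by rewrite /= ler_norml; apply/andP; split; lra.
Qed.

End pressure_squeeze.

Section bowen_balls.
Context {R : realType} {M : pmetricType R}.
Implicit Types (phi : M -> M) (n : nat) (eps : R).

Lemma mdist_lt_nbhs (z c : M) eps : mdist z c < eps -> nbhs z [set y | mdist y c < eps].
Proof.
move=> zc; have d0 : 0 < eps - mdist z c by rewrite subr_gt0.
apply/nbhs_ballP; exists (eps - mdist z c); first exact: d0.
move=> y; rewrite ballEmdist /= => zy.
by rewrite (le_lt_trans (metric_triangle y z c)) // metric_sym -ltrBrDr.
Qed.

Lemma mdist_lt_open (c : M) eps : open [set y | mdist y c < eps].
Proof. by rewrite openE => z; apply: mdist_lt_nbhs. Qed.

Lemma iter_continuous phi : continuous phi -> forall k, continuous (iter k phi).
Proof.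
move=> phi_cont; elim=> [|k IH] x /=; first exact: cvg_id.
exact: (continuous_comp (IH x) (phi_cont _)).
Qed.

Lemma bowen_ball_nbhs phi n x eps y : continuous phi ->
  bowen_ball phi n x eps y -> nbhs y (bowen_ball phi n x eps).
Proof.
move=> phi_cont; elim: n => [|n IH] yB; first by apply: nearW => z k; rewrite ltn0.
have /IH By : bowen_ball phi n x eps y by move=> k kn; apply: yB; apply: ltnW.
have Bn := iter_continuous _ phi_cont n y _ (mdist_lt_nbhs _ _ _ (yB n (ltnSn n))).
near=> z.
have zB : bowen_ball phi n x eps z by near: z.
have zBn : mdist (iter n phi z) (iter n phi x) < eps by near: z; apply: Bn.
by move=> k; rewrite ltnS leq_eqVlt => /predU1P[->//|]; apply: zB.
Unshelve. all: by end_near.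
Qed.

Lemma bowen_ball_open phi n x eps : continuous phi -> open (bowen_ball phi n x eps).
Proof. by move=> phi_cont; rewrite openE => y; apply: bowen_ball_nbhs. Qed.

Lemma bowen_ball_measurable phi n x eps : continuous phi ->
  measurable (bowen_ball phi n x eps : set (borelT M)).
Proof. by move=> phi_cont; apply: sub_sigma_algebra; apply: bowen_ball_open. Qed.

Lemma bowen_ball_center phi n x eps : 0 < eps -> bowen_ball phi n x eps x.
Proof. by move=> eps0 k _; rewrite mdistxx. Qed.

Lemma bowen_ball_sym phi n x y eps : bowen_ball phi n x eps y -> bowen_ball phi n y eps x.
Proof. by move=> xy k kn; rewrite metric_sym; apply: xy. Qed.

Lemma bowen_ball_le phi n x e1 e2 : e1 <= e2 ->
  bowen_ball phi n x e1 `<=` bowen_ball phi n x e2.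
Proof. by move=> e12 y yB k kn; apply: lt_le_trans (yB k kn) e12. Qed.

Lemma bowen_coverP phi n eps (E : {fset M}) :
  bowen_cover phi n eps E -> forall y, exists2 x, x \in E & bowen_ball phi n x eps y.
Proof.
by move=> EM y; have : [set: M] y by []; rewrite -EM => -[x /= xE yB]; exists x.
Qed.

Lemma bowen_cover_le phi n e1 e2 E : e1 <= e2 ->
  bowen_cover phi n e1 E -> bowen_cover phi n e2 E.
Proof.
move=> e12 /bowen_coverP EM; apply/seteqP; split => // y _.
by have [x xE yB] := EM y; exists x => //; apply: bowen_ball_le yB.
Qed.

Lemma bowen_cover_exists phi n eps : compact [set: M] -> continuous phi ->
  0 < eps -> exists E, bowen_cover phi n eps E.
Proof.
move=> cM phi_cont eps0; move: cM; rewrite compact_cover.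
case/(_ M [set: M] (fun x => bowen_ball phi n x eps)).
- by move=> x _; apply: bowen_ball_open.
- by move=> y _; exists y => //; apply: bowen_ball_center.
by move=> D _ DM; exists D; apply/seteqP; split => // y _; have [x] := DM y I; exists x.
Qed.

Lemma finite_net (r : R) : compact [set: M] -> 0 < r ->
  exists C : {fset M}, forall y, exists2 c, c \in C & mdist y c < r.
Proof.
move=> cM r0; have [C /bowen_coverP CM] := bowen_cover_exists id 1 r cM (fun x => cvg_id) r0.
by exists C => y; have [c cC /(_ 0%N isT)] := CM y; exists c.
Qed.

End bowen_balls.

Section compact_continuous.
Context {R : realType} {M : pmetricType R}.
Hypothesis cM : compact [set: M].

Lemma seq_pos_lb (T : eqType) (s : seq T) (g : T -> R) :
  (forall x, 0 < g x) -> exists2 d : R, 0 < d & forall x, x \in s -> d <= g x.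
Proof.
move=> g_gt0; elim: s => [|x s [d d0 sd]]; first by exists 1.
exists (Num.min (g x) d); first by rewrite lt_min g_gt0 d0.
move=> y; rewrite inE => /predU1P[->|ys]; first by rewrite ge_min lexx.
by rewrite ge_min sd // orbT.
Qed.

Lemma unif_continuous_compact (f : M -> R) : continuous f ->
  forall eta : R, 0 < eta -> exists2 d : R, 0 < d &
    forall x y, mdist x y < d -> `|f x - f y| < eta.
Proof.
move=> f_cont eta eta0; have eta2 : 0 < eta / 2 by rewrite divr_gt0.
have loc x : exists d, 0 < d /\ forall y, mdist x y < d -> `|f x - f y| < eta / 2.
  have /cvgrPdist_lt/(_ _ eta2)/nbhs_ballP[d d0 xd] := f_cont x.
  by exists d; split => // y xy; apply: xd; rewrite ballEmdist.
have [dx dxP] := choice loc.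
move: cM; rewrite compact_cover => /(_ M [set: M] (fun x => [set y | mdist y x < dx x / 2])).
case.
- by move=> x _; apply: mdist_lt_open.
- move=> y _; exists y => //=; rewrite mdistxx divr_gt0 //; exact: (dxP y).1.
move=> D _ DM.
have [d d0 dD] := @seq_pos_lb M D (fun x => dx x / 2)
  (fun x => divr_gt0 (dxP x).1 (ltr0Sn _ 1)).
exists d => // y z yz; have [c /= cD yc] := DM y I.
have cy : mdist c y < dx c.
  by rewrite metric_sym (lt_trans yc) // ltr_pdivrMr // ltr_pMr ?ltr1n; case: (dxP c).
have cz : mdist c z < dx c.
  rewrite (le_lt_trans (metric_triangle c y z)) // (splitr (dx c)) ltrD //.
    by rewrite metric_sym.
  by rewrite (lt_le_trans yz) // dD.
have -> : f y - f z = (f c - f z) - (f c - f y) by ring.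
by rewrite (le_lt_trans (ler_normB _ _)) // (splitr eta) ltrD // (dxP c).2.
Qed.

Lemma continuous_compact_bounded (f : M -> R) : continuous f ->
  exists B : R, forall x, `|f x| <= B.
Proof.
move=> f_cont.
have /compact_bounded [B [_ fB]] := continuous_compact (continuous_subspaceT f_cont) cM.
by exists (B + 1) => x; apply: (fB (B + 1)); [rewrite ltrDl | exists x].
Qed.

End compact_continuous.

Section birkhoff_sums.
Context {R : realType} {M : pmetricType R}.
Variable phi : M -> M.

Lemma birkhoffD (f g : M -> R) n x :
  birkhoff phi (fun y => f y + g y) n x = birkhoff phi f n x + birkhoff phi g n x.
Proof. by rewrite /birkhoff big_split. Qed.

Lemma norm_birkhoff_le (f : M -> R) (B : R) n x :
  (forall y, `|f y| <= B) -> `|birkhoff phi f n x| <= B * n%:R.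
Proof.
move=> fB; rewrite (le_trans (ler_norm_sum _ _ _)) //.
have -> : B * n%:R = \sum_(k < n) B by rewrite sumr_const card_ord mulr_natr.
exact: ler_sum.
Qed.

Lemma birkhoff_bowen_ball {f : M -> R} {d eta : R} {n x y} :
  (forall a b, mdist a b < d -> `|f a - f b| < eta) -> bowen_ball phi n x d y ->
  `|birkhoff phi f n y - birkhoff phi f n x| <= eta * n%:R.
Proof.
move=> fd yB; rewrite /birkhoff -sumrB (le_trans (ler_norm_sum _ _ _)) //.
have -> : eta * n%:R = \sum_(k < n) eta by rewrite sumr_const card_ord mulr_natr.
by apply: ler_sum => k _; apply/ltW/fd/yB.
Qed.

End birkhoff_sums.

Lemma classA_approx {R : realType} {M : pmetricType R} (phi : M -> M) G :
  classA phi G -> forall eta : R, 0 < eta -> exists2 g : M -> R, continuous g &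
    \forall n \near \oo, forall x, `|G n x - birkhoff phi g n x| <= eta * n%:R.
Proof.
move=> [_ [_ [Gk [Gk_cont Gk_cvg]]]] eta eta0.
move/fine_cvgP: Gk_cvg => [Gk_fin /cvgrPdist_lt /(_ _ eta0) Gk_lt].
have [k [k_fin]] := filter_ex (filterI Gk_fin Gk_lt); rewrite /= sub0r normrN => k_lt.
exists (Gk k) => //.
have /limn_esup_lt_near : (limn_esup (fun n =>
    sup_norm (fun x => (G n x - birkhoff phi (Gk k) n x)%R) * (n%:R^-1)%R%:E) < eta%:E)%E.
  by rewrite -(fineK k_fin) lte_fin (le_lt_trans (ler_norm _)).
apply: filterS2 (nbhs_infty_gt 0%N) => n n0 supn x.
have npos : (0 < n%:R :> R) by rewrite ltr0n.
have sup_lt : (sup_norm (fun x => (G n x - birkhoff phi (Gk k) n x)%R) < (eta * n%:R)%:E)%E.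
  move: supn; rewrite -(@lte_pmul2r _ n%:R%:E) ?lte_fin // -muleA -EFinM mulVf ?lt0r_neq0 //.
  by rewrite mule1 EFinM.
apply/ltW; rewrite -lte_fin; apply: le_lt_trans sup_lt.
by apply: ereal_sup_ubound; exists x.
Qed.

Lemma classA_approxD {R : realType} {M : pmetricType R} (phi : M -> M) G G' :
  classA phi G -> classA phi G' -> forall eta : R, 0 < eta -> exists2 g : M -> R, continuous g &
    \forall n \near \oo, forall x, `|G n x + G' n x - birkhoff phi g n x| <= eta * n%:R.
Proof.
move=> GA G'A eta eta0; have eta2 : 0 < eta / 2 by rewrite divr_gt0.
have [g g_cont Gg] := classA_approx _ _ GA _ eta2.
have [g' g'_cont G'g'] := classA_approx _ _ G'A _ eta2.
exists (fun x => g x + g' x); first by move=> x; apply: (continuousD (g_cont x) (g'_cont x)).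
move: Gg G'g'; apply: filterS2 => n Gg G'g' x; rewrite birkhoffD.
move: (Gg x) (G'g' x); rewrite !ler_norml => /andP[h1 h2] /andP[h3 h4].
by apply/andP; split; lra.
Qed.

Section cover_sum.
Context {R : realType} {M : pmetricType R}.
Variable phi : M -> M.
Hypothesis cM : compact [set: M].
Hypothesis phi_cont : continuous phi.

(* Z_n(H, eps) of the paper: [pressure phi H] is by definition the limit, as [eps]
   decreases to 0, of the lim sup of [ln (cover_sum phi H n eps) / n]. *)
Definition cover_sum (H : nat -> M -> R) (n : nat) (eps : R) : R :=
  fine (ereal_inf [set (\sum_(x <- E) expR (H n x))%:E
                  | E in [set E | bowen_cover phi n eps E]]).

Context {H : nat -> M -> R} {n : nat} {eps c : R}.
Hypothesis eps0 : 0 < eps.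
Hypothesis H_lb : forall x, c <= H n x.

Lemma cover_term_ge E : bowen_cover phi n eps E -> expR c <= \sum_(x <- E) expR (H n x).
Proof.
move=> /bowen_coverP/(_ point) [x xE _]; rewrite (le_trans _ (_ : expR (H n x) <= _)) //.
  by rewrite ler_expR.
by rewrite (bigD1_seq x) //= lerDl sumr_ge0 // => y _; apply: expR_ge0.
Qed.

Lemma cover_sumE : ereal_inf [set (\sum_(x <- E) expR (H n x))%:E
    | E in [set E | bowen_cover phi n eps E]] = (cover_sum H n eps)%:E.
Proof.
have [E0 E0M] := bowen_cover_exists phi n eps cM phi_cont eps0.
rewrite /cover_sum fineK // fin_numElt; apply/andP; split.
  apply: (@lt_le_trans _ _ (expR c)%:E); first exact: ltNyr.
  by apply: le_ereal_inf_tmp => _ [E /= EM <-]; rewrite lee_fin cover_term_ge.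
apply: (@le_lt_trans _ _ (\sum_(x <- E0) expR (H n x))%:E); last exact: ltry.
by apply: ereal_inf_lbound; exists E0.
Qed.

Lemma cover_sum_le E : bowen_cover phi n eps E ->
  cover_sum H n eps <= \sum_(x <- E) expR (H n x).
Proof. by move=> EM; rewrite -lee_fin -cover_sumE; apply: ereal_inf_lbound; exists E. Qed.

Lemma cover_sum_ge b :
  (forall E, bowen_cover phi n eps E -> b <= \sum_(x <- E) expR (H n x)) ->
  b <= cover_sum H n eps.
Proof.
move=> bE; rewrite -lee_fin -cover_sumE.
by apply: le_ereal_inf_tmp => _ [E /= EM <-]; rewrite lee_fin bE.
Qed.

Lemma cover_sum_gt0 : 0 < cover_sum H n eps.
Proof. by rewrite (lt_le_trans (expR_gt0 c)) // cover_sum_ge // => E; apply: cover_term_ge. Qed.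

End cover_sum.

Lemma cover_sum_antitone {R : realType} {M : pmetricType R} (phi : M -> M)
    {H : nat -> M -> R} {n} {c e1 e2 : R} :
  compact [set: M] -> continuous phi -> (forall x, c <= H n x) ->
  0 < e1 -> e1 <= e2 -> cover_sum phi H n e2 <= cover_sum phi H n e1.
Proof.
move=> cM phi_cont H_lb e10 e12.
apply: (cover_sum_ge phi cM phi_cont e10 H_lb) => E EM.
apply: (cover_sum_le phi cM phi_cont (lt_le_trans e10 e12) H_lb).
exact: bowen_cover_le e12 EM.
Qed.

Section integral_cover_bounds.
Context d {T : measurableType d} {R : realType} {I : choiceType}.
Variable mu : {measure set T -> \bar R}.
Variables (f : T -> R) (B : I -> set T) (c : I -> R).
Hypothesis f_meas : measurable_fun setT f.
Hypothesis f_ge0 : forall y, 0 <= f y.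
Hypothesis B_meas : forall i, measurable (B i).
Hypothesis c_ge0 : forall i, 0 <= c i.
Local Open Scope ereal_scope.

Let sum_indic_meas (E : {fset I}) :
  measurable_fun setT (fun y => \sum_(i <- E) c i * \1_(B i) y)%R.
Proof.
apply: measurable_sum => i; apply: measurable_realfun.measurable_funM.
  exact: measurable_cst.
exact: measurable_realfun.measurable_indic.
Qed.

Lemma integral_sum_indic (E : {fset I}) :
  \int[mu]_y ((\sum_(i <- E) c i * \1_(B i) y)%R)%:E = \sum_(i <- E) (c i)%:E * mu (B i).
Proof.
under eq_integral do rewrite -sumEFin.
rewrite ge0_integral_sum //; last first.
- by move=> i y _; rewrite lee_fin mulr_ge0.
- move=> i; apply/measurable_realfun.measurable_EFinP.
  apply: measurable_realfun.measurable_funM; first exact: measurable_cst.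
  exact: measurable_realfun.measurable_indic.
apply: eq_bigr => i _.
rewrite (@integralZl_indic _ _ _ mu setT measurableT (fun _ => B i) (c i)) //.
- by rewrite integral_indic // setIT.
- by move=> /lt_geF; rewrite c_ge0.
Qed.

Lemma integral_le_cover_sum (E : {fset I}) :
  (forall y, exists2 i, i \in E & B i y) ->
  (forall i y, i \in E -> B i y -> (f y <= c i)%R) ->
  \int[mu]_y (f y)%:E <= \sum_(i <- E) (c i)%:E * mu (B i).
Proof.
move=> EB fc; rewrite -integral_sum_indic.
apply: ge0_le_integral => //.
- by move=> y _; rewrite lee_fin.
- exact/measurable_realfun.measurable_EFinP.
- exact/measurable_realfun.measurable_EFinP/sum_indic_meas.
move=> y _; rewrite lee_fin; have [i iE yB] := EB y.
rewrite (le_trans (fc _ _ iE yB)) // (bigD1_seq i) //= indicE mem_set // mulr1 lerDl.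
by apply: sumr_ge0 => j _; rewrite mulr_ge0.
Qed.

Lemma disjoint_sum_le_integral (F : {fset I}) :
  (forall i j y, i \in F -> j \in F -> i != j -> B i y -> B j y -> False) ->
  (forall i y, i \in F -> B i y -> (c i <= f y)%R) ->
  \sum_(i <- F) (c i)%:E * mu (B i) <= \int[mu]_y (f y)%:E.
Proof.
move=> Fdisj cf; rewrite -integral_sum_indic.
apply: ge0_le_integral => //.
- by move=> y _; rewrite lee_fin; apply: sumr_ge0 => i _; rewrite mulr_ge0.
- exact/measurable_realfun.measurable_EFinP/sum_indic_meas.
- exact/measurable_realfun.measurable_EFinP.
move=> y _; rewrite lee_fin.
have [[i iF yB]|noB] := pselect (exists2 i, i \in F & B i y).
  rewrite (bigD1_seq i) //= indicE mem_set // mulr1 big1_seq ?addr0; first exact: cf.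
  move=> j /andP[ji jF]; rewrite indicE memNset ?mulr0 // => yBj.
  by apply: (Fdisj i j y iF jF _ yB yBj); rewrite eq_sym.
rewrite big1_seq // => j /= jF; rewrite indicE memNset ?mulr0 // => yBj.
by apply: noB; exists j.
Qed.

End integral_cover_bounds.

Section separated_sets.
Context {R : realType} {M : pmetricType R}.
Variable phi : M -> M.
Hypothesis cM : compact [set: M].
Hypothesis phi_cont : continuous phi.
Variables (n : nat) (eps : R).
Hypothesis eps0 : 0 < eps.

Definition separated (F : {fset M}) := forall x x', x \in F -> x' \in F -> x != x' ->
  ~ bowen_ball phi n x (2 * eps) x'.

Lemma bowen_ball_triangle {x x' y : M} : bowen_ball phi n x eps y ->
  bowen_ball phi n x' eps y -> bowen_ball phi n x (2 * eps) x'.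
Proof.
move=> yx yx' k kn; rewrite (le_lt_trans (metric_triangle _ (iter k phi y) _)) //.
by rewrite mulr2n mulrDl mul1r ltrD // ?yx // metric_sym yx'.
Qed.

Lemma separated_card_bound : exists N, forall F, separated F -> (#|` F| <= N)%N.
Proof.
have [E0 /bowen_coverP E0M] := bowen_cover_exists phi n eps cM phi_cont eps0.
have pkE y : exists x, x \in E0 /\ bowen_ball phi n x eps y by have [x] := E0M y; exists x.
have [pk pkP] := choice pkE.
exists #|` E0| => F sepF.
have pk_inj : {in F &, injective pk}.
  move=> x x' xF x'F pkx; apply/eqP/negP => /negP xx'.
  apply: (sepF x' x x'F xF); first by rewrite eq_sym.
  have [_ /bowen_ball_sym Bx] := pkP x; have [_ /bowen_ball_sym Bx'] := pkP x'.
  by rewrite pkx in Bx; apply: bowen_ball_triangle Bx' Bx.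
have -> : #|` F| = #|` [fset pk x | x in F]%fset| by rewrite card_in_imfset.
apply: fsubset_leq_card; apply/fsubsetP => _ /imfsetP [x /= xF ->].
by case: (pkP x).
Qed.

Lemma exists_separated_cover : exists F : {fset M}, bowen_cover phi n (2 * eps) F /\
  (forall x x' y, x \in F -> x' \in F -> x != x' ->
     bowen_ball phi n x eps y -> bowen_ball phi n x' eps y -> False).
Proof.
have [[F [sepF FM]] | noF] := pselect (exists F, separated F /\ bowen_cover phi n (2 * eps) F).
  exists F; split => // x x' y xF x'F xx' yx yx'.
  exact: (sepF x x' xF x'F xx' (bowen_ball_triangle yx yx')).
have [N sepN] := separated_card_bound.
suff [F [sepF FN]] : exists F, separated F /\ #|` F| = N.+1.
  by have := sepN F sepF; rewrite FN ltnn.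
elim: N.+1 => [|m [F [sepF Fm]]].
  by exists fset0; split => // x x'; rewrite inE.
have [FM|] := pselect (forall y, exists2 x, x \in F & bowen_ball phi n x (2 * eps) y).
  exfalso; apply: noF; exists F; split => //.
  by apply/seteqP; split => // y _; have [x xF yx] := FM y; exists x.
move=> /existsNP [y yF'].
have yF : y \notin F.
  apply/negP => yF; apply: yF'; exists y => //.
  by apply: bowen_ball_center; rewrite mulr_gt0.
exists (y |` F)%fset; split; last by rewrite cardfsU1 yF Fm.
move=> x x'; rewrite !inE => /predU1P[->|xF] /predU1P[->|x'F] xx'.
- by rewrite eqxx in xx'.
- by move=> /bowen_ball_sym yx'; apply: yF'; exists x'.
- by move=> xy; apply: yF'; exists x.
- exact: sepF.
Qed.

End separated_sets.

Lemma ler_sum_surj {R : realType} (T1 T2 : eqType) (s : seq T1) (t : seq T2)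
    (g : T2 -> T1) (F : T1 -> R) :
  uniq s -> uniq t -> {subset s <= [seq g w | w <- t]} -> (forall x, 0 <= F x) ->
  \sum_(x <- s) F x <= \sum_(w <- t) F (g w).
Proof.
elim: s t => [|x s IH] t us ut st F0; first by rewrite big_nil sumr_ge0.
have /mapP[w0 w0t gw0] := st x (mem_head _ _).
rewrite (perm_big _ (perm_to_rem w0t)) /= !big_cons -gw0 lerD2l.
move: us; rewrite cons_uniq => /andP[xs us].
apply: IH => //; first exact: rem_uniq.
move=> x' x's; have /mapP[w wt gw] : x' \in [seq g w | w <- t].
  by apply: st; rewrite inE x's orbT.
apply/mapP; exists w => //; rewrite mem_rem_uniq // inE wt andbT.
by apply: contraNneq xs => ww0; rewrite gw0 -ww0 -gw.
Qed.

Section word_covers.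
Context {R : realType} {M : pmetricType R}.
Variable phi : M -> M.
Variables (C : {fset M}) (r : R) (h : M -> R) (eta Bh : R).
Variable net : M -> C.
Hypothesis netP : forall y, mdist y (val (net y)) < r.
Hypothesis r_gt0 : 0 < r.
Hypothesis eta_ge0 : 0 <= eta.
Hypothesis h_unif : forall a b, mdist a b < 2 * r -> `|h a - h b| < eta.
Hypothesis h_bounded : forall a, `|h a| <= Bh.

Hypothesis cM : compact [set: M].
Hypothesis phi_cont : continuous phi.

Definition word n := {ffun 'I_n -> C}.

Definition word_tube {n} (w : word n) : set M :=
  [set x | forall k : 'I_n, mdist (iter k phi x) (val (w k)) < 2 * r].

(* The shift by [eta] makes the weight of a word dominate [expR (birkhoff phi h n y)]
   for every point [y] of its tube. *)
Definition word_weight {n} (w : word n) : R := expR (\sum_(k < n) (h (val (w k)) + eta)).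

Definition word_covering {n} (S : {set word n}) : Prop :=
  forall x, exists2 w, w \in S & word_tube w x.

Definition word_of n x : word n := [ffun k : 'I_n => net (iter k phi x)].

Definition min_word_cover n : {set word n} :=
  [arg min_(S < [set: word n]%SET | `[< word_covering S >]) \sum_(w in S) word_weight w]%O.

Definition word_cover_sum n := \sum_(w in min_word_cover n) word_weight w.

Lemma word_of_tube n x : word_tube (word_of n x) x.
Proof. by move=> k; rewrite ffunE (lt_trans (netP _)) // ltr_pMl // ltr1n. Qed.

Lemma min_word_coverP n : word_covering (min_word_cover n) /\
  forall S : {set word n}, word_covering S -> word_cover_sum n <= \sum_(w in S) word_weight w.
Proof.
rewrite /word_cover_sum /min_word_cover; case: arg_minP.
  by apply/asboolP => x; exists (word_of n x); [rewrite inE | apply: word_of_tube].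
by move=> S /asboolP S_cov S_min; split => // S' S'_cov; apply/S_min/asboolP.
Qed.

Lemma word_weight_gt0 n (w : word n) : 0 < word_weight w.
Proof. exact: expR_gt0. Qed.

Lemma word_cover_sum_ge n : expR (- (Bh * n%:R)) <= word_cover_sum n.
Proof.
have [/(_ point) [w wS _] _] := min_word_coverP n.
apply: (@le_trans _ _ (word_weight w)).
  rewrite /word_weight ler_expR.
  have -> : - (Bh * n%:R) = \sum_(k < n) (- Bh) by rewrite sumr_const card_ord mulr_natr mulNrn.
  apply: ler_sum => k _; have := h_bounded (val (w k)); rewrite ler_norml => /andP[hk _].
  by rewrite (le_trans hk) // lerDl.
rewrite /word_cover_sum (bigD1 w) //= lerDl sumr_ge0 // => u _.
exact/ltW/word_weight_gt0.
Qed.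

Lemma word_cover_sum_gt0 n : 0 < word_cover_sum n.
Proof. exact: lt_le_trans (expR_gt0 _) (word_cover_sum_ge n). Qed.

Definition word_cat {n m} (u : word n) (v : word m) : word (n + m) :=
  [ffun i => match fintype.split i with inl j => u j | inr j => v j end].

Lemma word_weight_cat n m (u : word n) (v : word m) :
  word_weight (word_cat u v) = word_weight u * word_weight v.
Proof.
rewrite /word_weight -expRD big_split_ord; congr (expR (_ + _)); apply: eq_bigr => j _.
  by rewrite ffunE (unsplitK (inl _ j) : fintype.split (lshift m j) = inl j).
by rewrite ffunE (unsplitK (inr _ j) : fintype.split (rshift n j) = inr j).
Qed.

Lemma word_tube_cat n m (u : word n) (v : word m) x :
  word_tube u x -> word_tube v (iter n phi x) -> word_tube (word_cat u v) x.
Proof.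
move=> ux vx i; rewrite ffunE; case: splitP => j ij; first by have := ux j; rewrite ij.
by have := vx j; rewrite -iterD ij addnC.
Qed.

Lemma word_cover_sum_submul n m :
  word_cover_sum (n + m) <= word_cover_sum n * word_cover_sum m.
Proof.
have [cov_n _] := min_word_coverP n; have [cov_m _] := min_word_coverP m.
have [_ min_nm] := min_word_coverP (n + m).
set A := [set p : word n * word m |
  (p.1 \in min_word_cover n) && (p.2 \in min_word_cover m)]%SET.
set S := [set word_cat p.1 p.2 | p in A]%SET.
have cov_S : word_covering S.
  move=> x; have [u uS ux] := cov_n x; have [v vS vx] := cov_m (iter n phi x).
  exists (word_cat u v); last exact: word_tube_cat.
  by apply/imsetP; exists (u, v) => //; rewrite inE /= uS vS.
apply: (le_trans (min_nm _ cov_S)).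
have -> : word_cover_sum n * word_cover_sum m = \sum_(p in A) word_weight (word_cat p.1 p.2).
  rewrite /word_cover_sum big_distrlr /= pair_big_dep /=.
  by apply: eq_big => [p|p _]; rewrite ?inE ?word_weight_cat.
rewrite -!big_enum /=; apply: ler_sum_surj; rewrite ?enum_uniq //.
  by move=> w; rewrite mem_enum => /imsetP [p pA ->]; apply: map_f; rewrite mem_enum.
by move=> w; exact/ltW/word_weight_gt0.
Qed.

Let h_close a b : mdist a b < 2 * r -> h b <= h a + eta.
Proof. by move=> /h_unif; rewrite ltr_norml => /andP[hab _]; lra. Qed.

Lemma word_cover_sum_le_cover n (E : {fset M}) : bowen_cover phi n r E ->
  word_cover_sum n <= \sum_(x <- E) expR (birkhoff phi h n x + 2 * eta * n%:R).
Proof.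
move=> /bowen_coverP EM.
set S := [set w : word n | `[< exists2 x, x \in E & w = word_of n x >]]%SET.
have cov_S : word_covering S.
  move=> y; have [x xE yx] := EM y; exists (word_of n x).
    by rewrite inE; apply/asboolP; exists x.
  move=> k; rewrite ffunE (le_lt_trans (metric_triangle _ (iter k phi x) _)) //.
  by rewrite mulr2n mulrDl mul1r ltrD // yx.
have [_ min_n] := min_word_coverP n.
apply: (le_trans (min_n _ cov_S)).
apply: (@le_trans _ _ (\sum_(x <- E) word_weight (word_of n x))).
  rewrite -big_enum /=; apply: ler_sum_surj; rewrite ?enum_uniq ?fset_uniq //.
    by move=> w; rewrite mem_enum inE => /asboolP [x xE ->]; apply: map_f.
  by move=> w; exact/ltW/word_weight_gt0.
apply: ler_sum => x _; rewrite /word_weight /birkhoff ler_expR.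
have -> : \sum_(k < n) h (iter k phi x) + 2 * eta * n%:R =
    \sum_(k < n) (h (iter k phi x) + 2 * eta) by rewrite big_split /= sumr_const card_ord mulr_natr.
apply: ler_sum => k _; rewrite ffunE.
have : h (val (net (iter k phi x))) <= h (iter k phi x) + eta.
  by apply: h_close; rewrite (lt_trans (netP _)) // ltr_pMl // ltr1n.
lra.
Qed.

Lemma cover_le_word_cover_sum n : exists E : {fset M}, bowen_cover phi n (4 * r) E /\
  \sum_(x <- E) expR (birkhoff phi h n x) <= word_cover_sum n.
Proof.
have [cov _] := min_word_coverP n.
have pt_of (w : word n) : exists x, (exists y, word_tube w y) -> word_tube w x.
  by have [[y wy]|no_y] := pselect (exists y, word_tube w y); [exists y | exists point].
have [xw xwP] := choice pt_of.
set Sne := [set w in min_word_cover n | `[< exists y, word_tube w y >]]%SET.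
exists [fset xw w | w in Sne]%fset; split.
  apply/seteqP; split => // y _; have [w wS wy] := cov y.
  have wSne : w \in Sne by rewrite inE wS; apply/asboolP; exists y.
  exists (xw w); first by apply/imfsetP; exists w.
  move=> k kn; have := wy (Ordinal kn); have := xwP w (ex_intro _ y wy) (Ordinal kn) => /= xk yk.
  rewrite (le_lt_trans (metric_triangle _ (val (w (Ordinal kn))) _)) //.
  have -> : 4 * r = 2 * r + 2 * r by rewrite -mulrDl -natrD.
  by rewrite ltrD // metric_sym.
apply: (@le_trans _ _ (\sum_(w <- enum Sne) expR (birkhoff phi h n (xw w)))).
  apply: ler_sum_surj; rewrite ?fset_uniq ?enum_uniq //.
  by move=> _ /imfsetP [w /= wS ->]; apply: map_f; rewrite mem_enum.
rewrite big_enum /= (@le_trans _ _ (\sum_(w in Sne) word_weight w)) //.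
  apply: ler_sum => w; rewrite inE => /andP[_ /asboolP [y wy]].
  rewrite /word_weight ler_expR /birkhoff; apply: ler_sum => k _.
  by apply: h_close; rewrite metric_sym; apply: (xwP w (ex_intro _ y wy) k).
rewrite /word_cover_sum [X in _ <= X](bigID (fun w => `[< exists y, word_tube w y >])) /=.
rewrite (eq_bigl (fun w => (w \in min_word_cover n) && `[< exists y, word_tube w y >])).
  by rewrite lerDl sumr_ge0 // => w _; exact/ltW/word_weight_gt0.
by move=> w; rewrite inE.
Qed.

Lemma ln_word_cover_sum_cvg : exists L : R, (fun n => ln (word_cover_sum n) / n%:R) @ \oo --> L.
Proof.
have s_sub m n : ln (word_cover_sum (m + n)) <= ln (word_cover_sum m) + ln (word_cover_sum n).
  rewrite -lnM ?posrE ?word_cover_sum_gt0 // ler_ln ?posrE ?mulr_gt0 ?word_cover_sum_gt0 //.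
  exact: word_cover_sum_submul.
have s_lb : exists B, forall n, (0 < n)%N -> - B <= ln (word_cover_sum n) / n%:R.
  exists Bh => n n0; rewrite ler_pdivlMr ?ltr0n // mulNr -[X in X <= _]expRK.
  by rewrite ler_ln ?posrE ?expR_gt0 ?word_cover_sum_gt0 // word_cover_sum_ge.
by eexists; apply: (@fekete _ (fun n => ln (word_cover_sum n)) s_sub s_lb).
Qed.

Variables (H : nat -> M -> R) (n : nat) (c delta : R).
Hypothesis H_lb : forall x, c <= H n x.
Hypothesis H_near_h : forall x, `|H n x - birkhoff phi h n x| <= delta.

Lemma word_cover_sum_le_cover_sum :
  word_cover_sum n <= expR (delta + 2 * eta * n%:R) * cover_sum phi H n r.
Proof.
rewrite mulrC -ler_pdivrMr ?expR_gt0 //.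
apply: (cover_sum_ge phi cM phi_cont r_gt0 H_lb) => E EM.
rewrite ler_pdivrMr ?expR_gt0 // (le_trans (word_cover_sum_le_cover _ _ EM)) // big_distrl /=.
apply: ler_sum => x _; rewrite -expRD ler_expR.
by have := H_near_h x; rewrite ler_norml => /andP[h1 h2]; lra.
Qed.

Lemma cover_sum_le_word_cover_sum :
  cover_sum phi H n (4 * r) <= expR delta * word_cover_sum n.
Proof.
have [E [EM Esum]] := cover_le_word_cover_sum n.
have r4 : 0 < 4 * r by rewrite mulr_gt0.
rewrite (le_trans (cover_sum_le phi cM phi_cont r4 H_lb _ EM)) //.
rewrite (le_trans _ (ler_wpM2l (expR_ge0 _) Esum)) // big_distrr /=.
apply: ler_sum => x _; rewrite -expRD ler_expR.
by have := H_near_h x; rewrite ler_norml => /andP[h1 h2]; lra.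
Qed.

End word_covers.

Section weak_gibbs_integral.
Context {R : realType} {M : pmetricType R}.
Variables (phi : M -> M) (G G' : nat -> M -> R) (P : probability (borelT M) R).
Hypothesis cM : compact [set: M].
Hypothesis phi_cont : continuous phi.
Hypothesis G_A : classA phi G.
Hypothesis G'_A : classA phi G'.
Variables (p : R) (K : nat -> R -> R).
Hypothesis K_gibbs : forall n eps, (1 <= n)%N -> 0 < eps ->
  1 <= K n eps /\ forall x,
    (((K n eps)^-1 * expR (G n x - n%:R * p))%:E <= P (bowen_ball phi n x eps))%E /\
    (P (bowen_ball phi n x eps) <= (K n eps * expR (G n x - n%:R * p))%:E)%E.
Hypothesis K_subexp :
  (fun eps => limn_esup (fun n => (ln (K n eps) / n%:R)%:E)) @ 0^'+ --> (0 : \bar R).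

Let GG' n x := G n x + G' n x.
Let Iexp n := Rintegral P setT (fun x : borelT M => expR (G' n x)).
Let a n := ln (Iexp n) / n%:R.
Let z eps n := ln (cover_sum phi GG' n eps) / n%:R.

Let GG'_lb n : exists c, forall x, c <= GG' n x.
Proof.
case: G_A => /(_ n) [C1 GC1] _; case: G'_A => /(_ n) [C2 G'C2] _.
exists (- (C1 + C2)) => x; move: (GC1 x) (G'C2 x); rewrite /GG' !ler_norml.
by move=> /andP[h1 _] /andP[h2 _]; lra.
Qed.

Let Z_gt0 n eps : 0 < eps -> 0 < cover_sum phi GG' n eps.
Proof.
by move=> eps0; have [c cP] := GG'_lb n; exact: (cover_sum_gt0 phi cM phi_cont (H:=GG') eps0 cP).
Qed.

Let Z_le n eps E : 0 < eps -> bowen_cover phi n eps E ->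
  cover_sum phi GG' n eps <= \sum_(x <- E) expR (GG' n x).
Proof. by move=> eps0; have [c cP] := GG'_lb n; apply: (cover_sum_le phi cM phi_cont eps0 cP). Qed.

Let Z_ge n eps b : 0 < eps ->
  (forall E, bowen_cover phi n eps E -> b <= \sum_(x <- E) expR (GG' n x)) ->
  b <= cover_sum phi GG' n eps.
Proof. by move=> eps0; have [c cP] := GG'_lb n; apply: (cover_sum_ge phi cM phi_cont eps0 cP). Qed.

Let K_gt0 n eps : (0 < n)%N -> 0 < eps -> 0 < K n eps.
Proof. by move=> n0 eps0; have [K1 _] := K_gibbs n eps n0 eps0; apply: lt_le_trans K1. Qed.

Let expG'_meas n : measurable_fun [set: borelT M] (fun x : borelT M => expR (G' n x)).
Proof.
case: G'_A => _ [G'_meas _].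
exact: measurableT_comp (@measurable_realfun.measurable_expR R) (G'_meas n).
Qed.

Lemma integral_expG'_bounds n lo hi : (forall x, lo <= G' n x <= hi) ->
  (\int[P]_y (expR (G' n y))%:E)%E = (Iexp n)%:E /\ expR lo <= Iexp n <= expR hi.
Proof.
move=> G'lohi; have cst_int (v : R) : (\int[P]_y (cst v%:E) y = v%:E)%E.
  by rewrite integral_cst // -[X in (_ * X)%E]/(P setT) probability_setT mule1.
have up : (\int[P]_y (expR (G' n y))%:E <= (expR hi)%:E)%E.
  rewrite -(cst_int (expR hi)); apply: ge0_le_integral; rewrite //.
  - exact/measurable_realfun.measurable_EFinP.
  - by move=> y _; rewrite lee_fin ler_expR; case/andP: (G'lohi y).
have lo_le : ((expR lo)%:E <= \int[P]_y (expR (G' n y))%:E)%E.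
  rewrite -(cst_int (expR lo)); apply: ge0_le_integral; rewrite //.
  - by move=> y _; rewrite lee_fin expR_ge0.
  - exact/measurable_realfun.measurable_EFinP.
  - by move=> y _; rewrite lee_fin ler_expR; case/andP: (G'lohi y).
have int_fin : (\int[P]_y (expR (G' n y))%:E)%E \is a fin_num.
  by rewrite fin_numElt (lt_le_trans (ltNyr _) lo_le) (le_lt_trans up (ltry _)).
have intE : (\int[P]_y (expR (G' n y))%:E)%E = (Iexp n)%:E by rewrite /Iexp /Rintegral fineK.
by split => //; move: up lo_le; rewrite intE !lee_fin => -> ->.
Qed.

Let G'_bounded n : exists C, forall x, - C <= G' n x <= C.
Proof.
case: G'_A => /(_ n) [C G'C] _; exists C => x.
by rewrite -ler_norml.
Qed.

Let integral_expG'E n : (\int[P]_y (expR (G' n y))%:E)%E = (Iexp n)%:E.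
Proof. by have [C /integral_expG'_bounds []] := G'_bounded n. Qed.

Let Iexp_gt0 n : 0 < Iexp n.
Proof.
have [C /integral_expG'_bounds [_ /andP[lo _]]] := G'_bounded n.
exact: lt_le_trans (expR_gt0 _) lo.
Qed.

Lemma gibbs_regularity eta : 0 < eta -> exists2 e0 : R, 0 < e0 & forall eps, 0 < eps ->
  eps < e0 -> \forall n \near \oo, [/\ (0 < n)%N, ln (K n eps) <= eta * n%:R &
    forall x y, bowen_ball phi n x eps y -> `|G' n y - G' n x| <= eta * n%:R].
Proof.
move=> eta0; set e := eta / 3; have e0 : 0 < e by rewrite divr_gt0.
have [g' g'_cont G'g'] := classA_approx _ _ G'_A _ e0.
have [d d0 g'd] := unif_continuous_compact cM g' g'_cont _ e0.
move/fine_cvgP: K_subexp => [K_fin /cvgrPdist_lt /(_ _ e0) K_lt].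
have [eK eK0 K_near] := near_at_right0 (filterI K_fin K_lt).
exists (Num.min d eK); first by rewrite lt_min d0 eK0.
move=> eps eps0; rewrite lt_min => /andP[epsd epsK].
have [Kfin] := K_near _ eps0 epsK; rewrite /= sub0r normrN => Klt.
have /limn_esup_lt_near : (limn_esup (fun n => (ln (K n eps) / n%:R)%:E) < e%:E)%E.
  by rewrite -(fineK Kfin) lte_fin (le_lt_trans (ler_norm _)).
move=> Kn; move: Kn G'g' (nbhs_infty_gt 0%N); apply: filterS3 => n Kn G'n n0.
have npos : 0 < n%:R :> R by rewrite ltr0n.
split => // [|x y yB].
  have etan : 0 <= eta * n%:R by rewrite mulr_ge0 // ltW.
  by move: Kn; rewrite lte_fin ltr_pdivrMr // /e; lra.
have yBd : bowen_ball phi n x d y by apply: bowen_ball_le yB; apply: ltW.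
have := birkhoff_bowen_ball phi g'd yBd.
move: (G'n x) (G'n y); rewrite !ler_norml => /andP[h1 h2] /andP[h3 h4] /andP[h5 h6].
by apply/andP; split; rewrite /e in h1 h2 h3 h4 h5 h6 *; lra.
Qed.

Section fixed_scale.
Variables (n : nat) (eps delta : R).
Hypothesis n_gt0 : (0 < n)%N.
Hypothesis eps_gt0 : 0 < eps.
Hypothesis G'_osc : forall x y, bowen_ball phi n x eps y -> `|G' n y - G' n x| <= delta.

Let expG'_le x y : bowen_ball phi n x eps y -> expR (G' n y) <= expR (G' n x + delta).
Proof. by move=> /G'_osc; rewrite ler_expR ler_norml => /andP[h1 h2]; lra. Qed.

Let expG'_ge x y : bowen_ball phi n x eps y -> expR (G' n x - delta) <= expR (G' n y).
Proof. by move=> /G'_osc; rewrite ler_expR ler_norml => /andP[h1 h2]; lra. Qed.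

Lemma integral_le_cover (E : {fset M}) : bowen_cover phi n eps E ->
  Iexp n <= K n eps * expR (delta - n%:R * p) * \sum_(x <- E) expR (GG' n x).
Proof.
move=> /bowen_coverP EM; have [K1 K_ball] := K_gibbs n eps n_gt0 eps_gt0.
have := @integral_le_cover_sum _ _ _ _ P (fun y => expR (G' n y))
  (fun x => bowen_ball phi n x eps) (fun x => expR (G' n x + delta)) (expG'_meas n)
  (fun _ => expR_ge0 _) (fun x => bowen_ball_measurable phi n x eps phi_cont)
  (fun _ => expR_ge0 _) E EM (fun x y _ => expG'_le x y).
have gibbs_le : (\sum_(x <- E) (expR (G' n x + delta))%:E * P (bowen_ball phi n x eps) <=
    (\sum_(x <- E) expR (G' n x + delta) * (K n eps * expR (G n x - n%:R * p)))%:E)%E.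
  rewrite -sumEFin; apply: lee_sum => x _; rewrite EFinM lee_pmul //.
  exact: (K_ball x).2.
rewrite integral_expG'E => /le_trans/(_ gibbs_le); rewrite lee_fin => /le_trans; apply.
rewrite big_distrr /=; apply: ler_sum => x _.
rewrite mulrCA -expRD -mulrA -expRD ler_pM2l ?(lt_le_trans ltr01 K1) // ler_expR /GG'.
lra.
Qed.

Lemma separated_sum_le_integral (F : {fset M}) :
  (forall x x' y, x \in F -> x' \in F -> x != x' ->
     bowen_ball phi n x eps y -> bowen_ball phi n x' eps y -> False) ->
  \sum_(x <- F) expR (GG' n x) <= K n eps * expR (delta + n%:R * p) * Iexp n.
Proof.
move=> Fdisj; have [K1 K_ball] := K_gibbs n eps n_gt0 eps_gt0.
have K0 : 0 < K n eps := lt_le_trans ltr01 K1.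
have := @disjoint_sum_le_integral _ _ _ _ P (fun y => expR (G' n y))
  (fun x => bowen_ball phi n x eps) (fun x => expR (G' n x - delta)) (expG'_meas n)
  (fun _ => expR_ge0 _) (fun x => bowen_ball_measurable phi n x eps phi_cont)
  (fun _ => expR_ge0 _) F Fdisj (fun x y _ => expG'_ge x y).
have gibbs_ge : ((\sum_(x <- F) expR (G' n x - delta) *
    ((K n eps)^-1 * expR (G n x - n%:R * p)))%:E <=
    \sum_(x <- F) (expR (G' n x - delta))%:E * P (bowen_ball phi n x eps))%E.
  rewrite -sumEFin; apply: lee_sum => x _; rewrite EFinM lee_pmul //.
    by rewrite lee_fin mulr_ge0 ?invr_ge0 ?expR_ge0 ?ltW.
  exact: (K_ball x).1.
rewrite integral_expG'E => /(le_trans gibbs_ge); rewrite lee_fin => sum_le.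
rewrite -ler_pdivrMl ?mulr_gt0 ?expR_gt0 // (le_trans _ sum_le) // big_distrr /=.
apply: ler_sum => x _; rewrite invfM -expRN -mulrA -expRD mulrCA -expRD.
by rewrite ler_pM2l ?invr_gt0 // ler_expR /GG'; lra.
Qed.

End fixed_scale.

Let a_le_z eta : 0 < eta -> exists2 e0 : R, 0 < e0 & forall eps, 0 < eps -> eps < e0 ->
  \forall n \near \oo, a n <= z eps n - p + eta.
Proof.
move=> eta0; have [e0 e00 reg] := gibbs_regularity _ (divr_gt0 eta0 (ltr0Sn _ 1)).
exists e0 => // eps eps0 epse; apply: filterS (reg _ eps0 epse) => n [n0 Kn osc].
have I_le : Iexp n <= K n eps * expR (eta / 2 * n%:R - n%:R * p) * cover_sum phi GG' n eps.
  rewrite mulrC -ler_pdivrMr ?mulr_gt0 ?expR_gt0 ?K_gt0 //; apply: Z_ge => // E EM.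
  by rewrite ler_pdivrMr ?mulr_gt0 ?expR_gt0 ?K_gt0 // mulrC integral_le_cover.
have := ln_le_lnM_expR (Iexp_gt0 n) (K_gt0 _ _ n0 eps0) (Z_gt0 _ _ eps0) I_le.
move=> lnI_le; rewrite /a /z -addrA addr_div_nat //.
by apply: ler_wpM2r; rewrite ?invr_ge0 //; lra.
Qed.

Let z_le_a eta : 0 < eta -> exists2 e0 : R, 0 < e0 & forall eps, 0 < eps -> eps < e0 ->
  \forall n \near \oo, z (2 * eps) n - p - eta <= a n.
Proof.
move=> eta0; have [e0 e00 reg] := gibbs_regularity _ (divr_gt0 eta0 (ltr0Sn _ 1)).
exists e0 => // eps eps0 epse; apply: filterS (reg _ eps0 epse) => n [n0 Kn osc].
have [F [FM Fdisj]] := exists_separated_cover phi cM phi_cont n eps eps0.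
have eps20 : 0 < 2 * eps by rewrite mulr_gt0.
have Z_le_I : cover_sum phi GG' n (2 * eps) <= K n eps * expR (eta / 2 * n%:R + n%:R * p) * Iexp n.
  exact: le_trans (Z_le _ _ _ eps20 FM) (separated_sum_le_integral _ _ _ n0 eps0 osc _ Fdisj).
have := ln_le_lnM_expR (Z_gt0 _ _ eps20) (K_gt0 _ _ n0 eps0) (Iexp_gt0 n) Z_le_I.
move=> lnZ_le; rewrite /a /z -addrA addr_div_nat //.
by apply: ler_wpM2r; rewrite ?invr_ge0 //; lra.
Qed.

Let a_ub : exists C, \forall n \near \oo, a n <= C.
Proof.
have [g' g'_cont G'g'] := classA_approx _ _ G'_A _ ltr01.
have [B g'B] := continuous_compact_bounded cM _ g'_cont.
exists (B + 1); apply: filterS2 G'g' (nbhs_infty_gt 0%N) => n G'n n0.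
have G'_range x : - ((B + 1) * n%:R) <= G' n x <= (B + 1) * n%:R.
  move: (G'n x) (norm_birkhoff_le phi g' B n x g'B); rewrite !ler_norml.
  by move=> /andP[h1 h2] /andP[h3 h4]; apply/andP; split; lra.
have [_ /andP[_ I_le]] := integral_expG'_bounds _ _ _ G'_range.
rewrite /a ler_pdivrMr ?ltr0n // -[X in _ <= X]expRK ler_ln ?posrE ?expR_gt0 //.
Qed.

Let z_antitone e1 e2 n : 0 < e1 -> e1 <= e2 -> z e2 n <= z e1 n.
Proof.
move=> e10 e12; have e20 := lt_le_trans e10 e12.
rewrite /z ler_wpM2r ?invr_ge0 // ler_ln ?posrE ?Z_gt0 //.
by have [c cP] := GG'_lb n; apply: (cover_sum_antitone phi cM phi_cont cP e10 e12).
Qed.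

Let z_nearly_cvg eta : 0 < eta -> exists2 e0 : R, 0 < e0 & forall r, 0 < r -> r < e0 ->
  exists L, (\forall n \near \oo, L - eta <= z r n) /\
            (\forall n \near \oo, z (4 * r) n <= L + eta).
Proof.
move=> eta0; set e := eta / 4; have e0 : 0 < e by rewrite divr_gt0.
have [h h_cont GG'h] := classA_approxD _ _ _ G_A G'_A _ e0.
have [Bh h_bounded] := continuous_compact_bounded cM _ h_cont.
have [d d0 hd] := unif_continuous_compact cM _ h_cont _ e0.
exists (d / 2); first by rewrite divr_gt0.
move=> r r0 rd; have [C CM] := finite_net r cM r0.
have near_pt y : exists c : C, mdist y (val c) < r.
  by have [c cC yc] := CM y; exists [` cC]%fset.
have [net netP] := choice near_pt.
have h_unif u v : mdist u v < 2 * r -> `|h u - h v| < e.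
  by move=> uv; apply: hd; rewrite (lt_trans uv) //; lra.
set ws := word_cover_sum phi C r h e.
have ws_gt0 := @word_cover_sum_gt0 _ _ phi C r h e Bh net netP r0 (ltW e0) h_bounded.
have [L /cvgrPdist_le /(_ _ e0) L_near] :=
  @ln_word_cover_sum_cvg _ _ phi C r h e Bh net netP r0 (ltW e0) h_bounded.
exists L; split; move: L_near GG'h (nbhs_infty_gt 0%N); apply: filterS3 => n Ln GG'n n0;
  have [c cP] := GG'_lb n; move: Ln; rewrite ler_distlC => /andP[Ln nL].
- have := @word_cover_sum_le_cover_sum _ _ phi C r h e net netP r0 h_unif cM phi_cont
    GG' n c (e * n%:R) cP GG'n.
  move=> /(ln_le_expRM (ws_gt0 n) (Z_gt0 _ _ r0)) ws_le.
  have : ln (ws n) / n%:R <= z r n + 3 * e.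
    by rewrite /z addr_div_nat // ler_wpM2r ?invr_ge0 //; lra.
  by rewrite /e in Ln nL *; lra.
- have := @cover_sum_le_word_cover_sum _ _ phi C r h e net netP r0 h_unif cM phi_cont
    GG' n c (e * n%:R) cP GG'n.
  have r40 : 0 < 4 * r by rewrite mulr_gt0.
  move=> /(ln_le_expRM (Z_gt0 _ _ r40) (ws_gt0 n)) Z_le_ws.
  have : z (4 * r) n <= ln (ws n) / n%:R + e.
    by rewrite /z addr_div_nat // ler_wpM2r ?invr_ge0 //; lra.
  by rewrite /e in Ln nL *; lra.
Qed.

Lemma ln_integral_expR_cvg :
  (fun n => (ln (Rintegral P setT (fun x : borelT M => expR (G' n x))) / n%:R)%:E) @ \oo -->
  (pressure phi (fun n x => (G n x + G' n x)%R) - p%:E)%E.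
Proof. exact: (@pressure_squeeze _ a z p z_antitone a_ub a_le_z z_le_a z_nearly_cvg). Qed.

End weak_gibbs_integral.

Theorem lemma5p4 (R : realType) (M : pmetricType R) (phi : M -> M)
    (G : nat -> M -> R) (P : probability (borelT M) R) :
  compact [set: M] -> continuous phi ->
  (htop phi < +oo)%E -> entropy_usc phi ->
  classA phi G -> weak_gibbs phi G P ->
  forall G' : nat -> M -> R, classA phi G' ->
    (fun n => (ln (Rintegral P setT (fun x : borelT M => expR (G' n x))) / n%:R)%:E)
      @ \oo --> (pressure phi (fun n x => (G n x + G' n x)%R) - pressure phi G)%E.
Proof.
move=> cM phi_cont _ _ G_A [p [-> [K [K_gibbs K_subexp]]]] G' G'_A.
exact: (ln_integral_expR_cvg _ _ _ _ cM phi_cont G_A G'_A _ _ K_gibbs K_subexp).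
Qed.
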